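(* Let $r\geq 1$ and $n_1,\ldots,n_r>1$ be integers, let $R=\mathbb{Z}_{n_1}\oplus\cdots\oplus \mathbb{Z}_{n_r}$ be the direct sum of the residue class rings $\mathbb{Z}_{n_1},\ldots,\mathbb{Z}_{n_r}$, let $\mathcal{S}_R$ be the multiplicative semigroup of the ring $R$, and let ${\rm U}(\mathcal{S}_R)$ be the group of units of $\mathcal{S}_R$. Then $${\rm D}({\rm U}(\mathcal{S}_R))+P_2\leq {\rm D}(\mathcal{S}_R)\leq {\rm D}({\rm U}(\mathcal{S}_R))+\delta,$$ where $P_2=\#\{i\in [1,r]: 2 \parallel n_i\}$ (i.e. $2\mid n_i$ but $4\nmid n_i$) and $\delta=\#\{i\in [1,r]: 2\mid n_i\}$.
   Context: For a finite commutative semigroup $\mathcal{S}$ (with operation written $+$), a sequence $T=a_1a_2\cdots a_\ell$ of elements of $\mathcal{S}$ (a finite multiset; order irrelevant) is called reducible if there is a proper subsequence $T'$ of $T$ (possibly empty, a sub-multiset different from $T$) whose sum equals the sum of all terms of $T$; the sum of the empty sequence is the identity element of $\mathcal{S}$ (here $\mathcal{S}$ has an identity). The Davenport constant ${\rm D}(\mathcal{S})$ is the smallest positive integer $\ell$ such that every sequence of elements of $\mathcal{S}$ of length at least $\ell$ is reducible. For a finite abelian group $G$ this coincides with the classical Davenport constant: the smallest $\ell$ such that every sequence of $\ell$ elements of $G$ has a nonempty subsequence summing to the identity. The semigroup $\mathcal{S}_R$ has as its operation the ring multiplication of $R$ (written additively as $+$ in the semigroup), with identity element $(\overline{1},\ldots,\overline{1})$;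 ${\rm U}(\mathcal{S}_R)$ is the set of elements having an inverse under this operation. *)

From mathcomp Require Import all_boot all_algebra.
Set Implicit Arguments. Unset Strict Implicit. Unset Printing Implicit Defensive.
Import GRing.Theory.

(* Sequences are restricted to elements of A
   (A = predT for the whole semigroup, A = units for the unit group). *)
Section Davenport.
Variables (T : finType) (op : T -> T -> T) (e : T).

Definition seqsum (s : seq T) : T := foldr op e s.

Definition reducible (s : seq T) : Prop :=
  exists m : bitseq, [/\ size m = size s, ~~ all id m & seqsum (mask m s) = seqsum s].

Definition all_long_reducible (A : {pred T}) (l : nat) : Prop :=
  forall s : seq T, all (mem A) s -> l <= size s -> reducible s.

Definition is_davenport (A : {pred T}) (l : nat) : Prop :=
  [/\ 0 < l, all_long_reducible A l &
      forall l', 0 < l' -> all_long_reducible A l' -> l <= l'].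

Definition is_unit (x : T) : bool := [exists y, op x y == e].

End Davenport.

Definition ringR (r : nat) (n : 'I_r -> nat) := {dffun forall i : 'I_r, 'Z_(n i)}.

Definition mulR (r : nat) (n : 'I_r -> nat) (x y : ringR n) : ringR n :=
  [ffun i => (x i * y i)%R].

Definition oneR (r : nat) (n : 'I_r -> nat) : ringR n := [ffun i => 1%R].

From mathcomp Require Import all_boot all_algebra.
From Stdlib Require Import Classical.
Set Implicit Arguments. Unset Strict Implicit. Unset Printing Implicit Defensive.
Import GRing.Theory.

(* Lower bound: append to a longest irreducible sequence of units the elements
   e_i (2 in coordinate i, 1 elsewhere) for the i with 2 || n_i.  Dropping an
   e_i leaves a unit in coordinate i while 2 is not a unit there, and a unit d
   with 2d = 2 in Z_{n_i} is 1 because n_i/2 is odd; so the sequence stays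
   irreducible.
   Upper bound: scan an irreducible sequence a_1 ... a_l with running product
   x.  Working coordinatewise in Z_{n_i}, each step either gives x a_k = x u
   for a unit u, or admits a unit w fixing x a_k but not x, or makes some
   ideal x_i Z_{n_i} drop from even to odd size; the last happens at most
   once per coordinate with n_i even.  Replacing the a_k of the first kind by
   their units u and collecting the w of the second kind yields an irreducible
   sequence of units of length at least l - delta. *)

Lemma classical_least (P : nat -> Prop) n : P n ->
  exists2 l, P l & forall k, P k -> l <= k.
Proof.
elim/ltn_ind: n => n IH Pn.
have [[k Pk lt_kn] | no_smaller] := classic (exists2 k, P k & k < n).
  exact: IH lt_kn Pk.
exists n => // k Pk; rewrite leqNgt; apply/negP => lt_kn.
by apply: no_smaller; exists k.
Qed.

Lemma mask_all_true T (m : bitseq) (s : seq T) :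
  size m = size s -> all id m -> mask m s = s.
Proof. by elim: m s => [|b m IH] [|x s] //= [/IH sz] /andP[-> /sz ->]. Qed.

Lemma mask_none_true T (m : bitseq) (s : seq T) :
  size m = size s -> ~~ has id m -> mask m s = [::].
Proof.
by move=> sz no_m; apply: size0nil; apply/eqP; rewrite size_mask // eqn0Ngt -has_count.
Qed.

Lemma all_map_negb (m : bitseq) : all id (map negb m) = ~~ has id m.
Proof. by elim: m => //= b m ->; rewrite negb_or. Qed.

Lemma has_map_negb (m : bitseq) : has id (map negb m) = ~~ all id m.
Proof. by elim: m => //= b m ->; rewrite negb_and. Qed.

Section CommMonoid.
Variables (T : finType) (op : T -> T -> T) (e : T).
Hypotheses (opA : associative op) (opC : commutative op) (op1m : left_id e op).

Local Notation prod := (seqsum op e).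
Local Notation invertible := (is_unit op e).

Lemma opm1 : right_id e op.
Proof. by move=> x; rewrite opC op1m. Qed.

Lemma opCA : left_commutative op.
Proof. by move=> x y z; rewrite !opA (opC x). Qed.

Lemma prod_cat s1 s2 : prod (s1 ++ s2) = op (prod s1) (prod s2).
Proof. by elim: s1 => [|a s1 IH] /=; rewrite ?op1m // [seqsum _ _ _]IH opA. Qed.

Lemma prod_insert B a s : prod (B ++ a :: s) = op a (prod (B ++ s)).
Proof. by rewrite !prod_cat /= opCA. Qed.

Lemma prod_mask_split m s : size m = size s ->
  prod s = op (prod (mask m s)) (prod (mask (map negb m) s)).
Proof.
elim: s m => [|a s IH] [|b m] //=.
by case=> /IH {1}->; case: b => /=; [rewrite opA | rewrite opCA].
Qed.

Lemma prod_mask_insert B a s (m1 m2 : bitseq) b : size m1 = size B ->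
  prod (mask (m1 ++ b :: m2) (B ++ a :: s)) =
  op (if b then a else e) (prod (mask (m1 ++ m2) (B ++ s))).
Proof.
by move=> sz; rewrite !mask_cat // !prod_cat; case: b => /=; rewrite ?op1m // opCA.
Qed.

Lemma split_mask_at (B s : seq T) a (m : bitseq) : size m = size (B ++ a :: s) ->
  exists m1 b m2, [/\ m = m1 ++ b :: m2, size m1 = size B & size m2 = size s].
Proof.
move=> sz; have lt_Bm : size B < size m by rewrite sz size_cat /= addnS ltnS leq_addr.
exists (take (size B) m), (nth false m (size B)), (drop (size B).+1 m).
rewrite -drop_nth // cat_take_drop size_takel; last exact: ltnW.
by rewrite size_drop sz size_cat /= addnS subSS addKn.
Qed.

Lemma reducible_idle_infix s1 s2 s3 : s2 != [::] -> prod (s1 ++ s2) = prod s1 ->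
  reducible op e (s1 ++ s2 ++ s3).
Proof.
move=> s2_nil eq_prod.
exists (nseq (size s1) true ++ nseq (size s2) false ++ nseq (size s3) true); split.
- by rewrite !size_cat !size_nseq.
- by rewrite !all_cat !all_nseq !orbT orbF andbT size_eq0.
- rewrite !mask_cat ?size_nseq // !mask_true // mask_false /=.
  by rewrite catA [RHS]prod_cat eq_prod prod_cat.
Qed.

Lemma reducible_long s : #|T| <= size s -> reducible op e s.
Proof.
move=> long; pose f (k : 'I_(size s).+1) := prod (take k s).
have /injectivePn[k1 [k2 k12 f12]] : ~~ injectiveb f.
  by apply/injectiveP => /leq_card; rewrite card_ord ltnNge long.
wlog lt_k12 : k1 k2 k12 f12 / k1 < k2.
  move=> wlog; have [lt|lt|/val_inj eq_k] := ltngtP k1 k2.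
  - exact: wlog lt.
  - by apply: (wlog k2 k1); rewrite // eq_sym.
  - by rewrite eq_k eqxx in k12.
rewrite /f /= in f12.
rewrite -(cat_take_drop k2 s) -(subnKC (ltnW lt_k12)) takeD -catA.
apply: reducible_idle_infix; last by rewrite -takeD (subnKC (ltnW lt_k12)).
have k2_le : k2 <= size s by rewrite -ltnS.
by rewrite -size_eq0 size_takel ?size_drop ?leq_sub2r // subn_eq0 -ltnNge.
Qed.

Lemma davenport_exists A : exists d, is_davenport op e A d.
Proof.
have [d [d_gt0 d_red] d_min] :
    exists2 d, 0 < d /\ all_long_reducible op e A d &
      forall k, 0 < k /\ all_long_reducible op e A k -> d <= k.
  apply: (@classical_least _ #|T|.+1); split => // s _ /ltnW.
  exact: reducible_long.
by exists d; split => // k k_gt0 k_red; apply: d_min.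
Qed.

Lemma davenport_witness A d : is_davenport op e A d ->
  exists s, [/\ all (mem A) s, ~ reducible op e s & d.-1 <= size s].
Proof.
case=> d_gt0 _ d_min; apply: NNPP => no_witness.
have [d1 | d1_gt0] := posnP d.-1.
  apply: no_witness; exists [::]; split; rewrite ?d1 //.
  by case=> m [sz not_all _]; case: m sz not_all.
suff : d <= d.-1 by rewrite leqNgt ltn_predL d_gt0.
apply: d_min d1_gt0 _ => s s_A s_long; apply: NNPP => s_irr.
by apply: no_witness; exists s.
Qed.

Lemma invertibleM x y : invertible x -> invertible y -> invertible (op x y).
Proof.
move=> /existsP[x' /eqP xx'] /existsP[y' /eqP yy']; apply/existsP; exists (op x' y').
by rewrite -opA (opCA y) opA xx' op1m yy'.
Qed.

Lemma invertible_prod s : all invertible s -> invertible (prod s).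
Proof.
elim: s => [_|a s IH /andP[a_u /IH s_u]]; last exact: invertibleM.
by apply/existsP; exists e; rewrite /= op1m.
Qed.

Lemma invertible_cancel x y z : invertible x -> op x y = op x z -> y = z.
Proof.
case/existsP=> x' /eqP xx' xyz.
by rewrite -[y]op1m -[z]op1m -xx' (opC x) -!opA xyz.
Qed.

Definition unit_rigid t := forall u v (m : bitseq), invertible u -> invertible v ->
  size m = size t -> ~~ all id m -> op u (prod (mask m t)) <> op v (prod t).

Definition unit_stab_trivial t :=
  forall d, invertible d -> op d (prod t) = prod t -> d = e.

Lemma irreducible_cat_units s t :
  all invertible s -> ~ reducible op e s -> unit_rigid t -> unit_stab_trivial t ->
  ~ reducible op e (s ++ t).
Proof.
move=> s_u s_irr t_rigid t_stab [m [sz]].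
rewrite -(cat_take_drop (size s) m).
set m1 := take (size s) m; set m2 := drop (size s) m.
have sz1 : size m1 = size s by rewrite size_takel // sz size_cat leq_addr.
have sz2 : size m2 = size t by rewrite size_drop sz size_cat addKn.
rewrite mask_cat // !prod_cat all_cat => not_all eq_prod.
have P_u := invertible_prod (all_mask m1 s_u).
have [m2_all | m2_not] := boolP (all id m2); last first.
  exact: t_rigid P_u (invertible_prod s_u) sz2 m2_not eq_prod.
rewrite m2_all andbT in not_all; rewrite (mask_all_true sz2 m2_all) in eq_prod.
have D_e : prod (mask (map negb m1) s) = e.
  apply: t_stab; first exact/invertible_prod/all_mask.
  apply: (invertible_cancel P_u); rewrite opA -(prod_mask_split sz1).
  by rewrite eq_prod.
by apply: s_irr; exists m1; rewrite (prod_mask_split sz1) D_e opm1.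
Qed.

Lemma davenport_lower_bound t dS dU :
  is_davenport op e predT dS -> is_davenport op e invertible dU ->
  unit_rigid t -> unit_stab_trivial t -> dU + size t <= dS.
Proof.
move=> [_ dS_red _] hU t_rigid t_stab; have [dU_gt0 _ _] := hU.
have [s [s_u s_irr le_s]] := davenport_witness hU.
have st_irr := irreducible_cat_units s_u s_irr t_rigid t_stab.
rewrite -(prednK dU_gt0) addSn ltnNge; apply/negP => long.
apply: st_irr; apply: dS_red; first exact/allP.
by rewrite size_cat (leq_trans long) // leq_add2r.
Qed.

Definition irreducible_at x s := forall m : bitseq, size m = size s ->
  ~~ all id m -> op x (prod (mask m s)) <> op x (prod s).

Definition fixfree x W := forall m : bitseq, size m = size W ->
  has id m -> op x (prod (mask m W)) <> x.

Lemma irreducible_at_id s : ~ reducible op e s -> irreducible_at e s.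
Proof.
by move=> s_irr m sz not_all; rewrite !op1m => eq_prod; apply: s_irr; exists m.
Qed.

Lemma irreducible_at_swap x a u B s : op x a = op x u ->
  irreducible_at x (B ++ a :: s) -> irreducible_at x (B ++ u :: s).
Proof.
move=> xa_xu irr m sz; have [m1 [b [m2 [-> sz1 sz2]]]] := split_mask_at sz.
have sz' : size (m1 ++ b :: m2) = size (B ++ a :: s) by rewrite !size_cat /= sz1 sz2.
move=> /(irr _ sz'); rewrite !prod_mask_insert // !prod_insert.
by case: b {sz'} => /=; rewrite !opA xa_xu.
Qed.

Lemma irreducible_at_drop x a B s :
  irreducible_at x (B ++ a :: s) -> irreducible_at (op x a) (B ++ s).
Proof.
move=> irr m sz not_all.
have sz1 : size (take (size B) m) = size B.
  by rewrite size_takel // sz size_cat leq_addr.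
have := irr (take (size B) m ++ true :: drop (size B) m).
rewrite prod_mask_insert // prod_insert cat_take_drop !opA; apply.
  by rewrite !size_cat /= sz1 size_drop sz size_cat addKn.
by rewrite all_cat /= -all_cat cat_take_drop.
Qed.

Lemma fixfree_of_irreducible_at x W : irreducible_at x W -> fixfree x W.
Proof.
move=> irr m sz has_m fix_x.
have sz' : size (map negb m) = size W by rewrite size_map.
apply: (irr _ sz'); first by rewrite all_map_negb has_m.
by rewrite (prod_mask_split sz) opA fix_x.
Qed.

Lemma fixfree_weaken x a W : fixfree (op x a) W -> fixfree x W.
Proof.
move=> ff m sz has_m fix_x; apply: (ff m sz has_m).
by rewrite -opA (opC a) opA fix_x.
Qed.

Lemma fixfree_cons x a w W : fixfree (op x a) W ->
  op (op x a) w = op x a -> op x w <> x -> fixfree x (w :: W).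
Proof.
move=> ff xaw xw [|[] m] //= [sz] has_m; last first.
  by rewrite /= in has_m; apply: fixfree_weaken ff m sz has_m.
have [has_m' | no_m] := boolP (has id m); last by rewrite mask_none_true // opm1.
move=> fix_x; apply: (ff m sz has_m').
by rewrite -{1}xaw -!opA (opC a) opA fix_x.
Qed.

Lemma irreducible_of_fixfree W : all invertible W -> fixfree e W -> ~ reducible op e W.
Proof.
move=> W_u ff [m [sz not_all eq_prod]].
have sz' : size (map negb m) = size W by rewrite size_map.
apply: (ff _ sz'); first by rewrite has_map_negb.
rewrite op1m; apply: (invertible_cancel (invertible_prod (all_mask m W_u))).
by rewrite -(prod_mask_split sz) opm1 eq_prod.
Qed.

Section Potential.
Variable phi : T -> nat.
Hypothesis phi_mono : forall x a, phi (op x a) <= phi x.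
Hypothesis trichotomy : forall x a,
  [\/ exists2 u, invertible u & op x a = op x u,
      exists w, [/\ invertible w, op (op x a) w = op x a & op x w <> x]
    | phi (op x a) < phi x].

Lemma irreducible_at_reduce s x B : all invertible B -> irreducible_at x (B ++ s) ->
  exists W, [/\ all invertible W, fixfree x W & size B + size s <= size W + phi x].
Proof.
elim: s x B => [|a s IH] x B B_u irr.
  rewrite cats0 in irr; exists B.
  by split; [| exact: fixfree_of_irreducible_at | rewrite addn0 leq_addr].
have [[u u_u xau] | [w [w_u xaw xw]] | phi_lt] := trichotomy x a.
- have Bu_u : all invertible (rcons B u) by rewrite all_rcons u_u.
  have irr' : irreducible_at x (rcons B u ++ s).
    by rewrite cat_rcons; apply: irreducible_at_swap xau irr.
  have [W [W_u ff le_W]] := IH x _ Bu_u irr'.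
  by exists W; split => //; rewrite size_rcons addSn in le_W; rewrite /= addnS.
- have [W [W_u ff le_W]] := IH (op x a) B B_u (irreducible_at_drop irr).
  exists (w :: W); split; [by rewrite /= w_u | exact: fixfree_cons ff xaw xw |].
  by rewrite /= addnS addSn ltnS (leq_trans le_W) // leq_add2l phi_mono.
have [W [W_u ff le_W]] := IH (op x a) B B_u (irreducible_at_drop irr).
exists W; split => //; first exact: fixfree_weaken ff.
by rewrite /= addnS; apply: leq_ltn_trans le_W _; rewrite ltn_add2l.
Qed.

Lemma irreducible_units_bound s : ~ reducible op e s ->
  exists W, [/\ all invertible W, ~ reducible op e W & size s <= size W + phi e].
Proof.
move=> /irreducible_at_id irr.
have [W [W_u ff le_W]] := @irreducible_at_reduce s e [::] isT irr.
by exists W; split => //; apply: irreducible_of_fixfree.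
Qed.

Lemma davenport_upper_bound dS dU :
  is_davenport op e predT dS -> is_davenport op e invertible dU ->
  dS <= dU + phi e.
Proof.
case=> _ _ dS_min [dU_gt0 dU_red _].
apply: dS_min => [|s _ long]; first by rewrite addn_gt0 dU_gt0.
apply: NNPP => /irreducible_units_bound[W [W_u W_irr le_W]].
apply: W_irr; apply: dU_red; first exact: W_u.
by rewrite -(leq_add2r (phi e)) (leq_trans long).
Qed.

End Potential.

End CommMonoid.

Lemma coprime_of_primes a b : 0 < b ->
  (forall p, prime p -> p %| b -> ~~ (p %| a)) -> coprime a b.
Proof.
move=> b_gt0 nodiv; have g_gt0 : 0 < gcdn a b by rewrite gcdn_gt0 b_gt0 orbT.
rewrite /coprime eqn_leq g_gt0 andbT leqNgt; apply/negP => /pdiv_prime p_pr.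
have p_dvd := pdiv_dvd (gcdn a b).
have := nodiv _ p_pr (dvdn_trans p_dvd (dvdn_gcdr a b)).
by rewrite (dvdn_trans p_dvd (dvdn_gcdl a b)).
Qed.

Lemma coprime_divn_gcd a n : 0 < n -> coprime (a %/ gcdn a n) (n %/ gcdn a n).
Proof.
move=> n_gt0; have g_gt0 : 0 < gcdn a n by rewrite gcdn_gt0 n_gt0 orbT.
by rewrite /coprime -(eqn_pmul2r g_gt0) mul1n muln_gcdl !divnK ?dvdn_gcdl ?dvdn_gcdr.
Qed.

Lemma eqn_modMl a u v n : 0 < n ->
  (a * u == a * v %[mod n]) = (u == v %[mod n %/ gcdn a n]).
Proof.
move=> n_gt0; wlog le_vu : u v / v <= u.
  by move=> wlog; have [/wlog//|/ltnW/wlog] := leqP v u; rewrite eq_sym [in RHS]eq_sym.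
have g_gt0 : 0 < gcdn a n by rewrite gcdn_gt0 n_gt0 orbT.
rewrite !eqn_mod_dvd ?leq_mul2l ?le_vu ?orbT // -mulnBr.
rewrite -[n in n %| _](divnK (dvdn_gcdr a n)).
rewrite -[a in _ %| a * _](divnK (dvdn_gcdl a n)) mulnAC.
by rewrite dvdn_pmul2r // Gauss_dvdr // coprime_sym coprime_divn_gcd.
Qed.

Lemma divn_gcdM a b n : 0 < n ->
  n %/ gcdn (a * b) n = (n %/ gcdn a n) %/ gcdn b (n %/ gcdn a n).
Proof.
move=> n_gt0; have g_gt0 : 0 < gcdn a n by rewrite gcdn_gt0 n_gt0 orbT.
have cop := coprime_divn_gcd a n_gt0.
set g := gcdn a n; rewrite -[in LHS](divnK (dvdn_gcdr a n)) -/g.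
rewrite -[a in gcdn (a * _)](divnK (dvdn_gcdl a n)) -/g mulnAC.
by rewrite -muln_gcdl divnMr // gcdnC Gauss_gcdr 1?coprime_sym // gcdnC.
Qed.

Lemma coprime_lift n d c : 0 < n -> d %| n -> coprime c d ->
  exists2 u, coprime u n & u = c %[mod d].
Proof.
move=> n_gt0 dvd_dn cop_cd.
pose t := \prod_(p <- primes n | ~~ (p %| c)) p.
have dvd_t p : prime p -> (p %| t) = (p \in primes n) && ~~ (p %| c).
  move=> p_pr; rewrite /t Euclid_dvd_prod // big_has_cond; apply/hasP/andP.
    case=> q q_n /andP[q_c p_q].
    have q_pr : prime q by move: q_n; rewrite mem_primes => /andP[].
    by move: p_q; rewrite dvdn_prime2 // => /eqP ->.
  by case=> p_n p_c; exists p => //=; rewrite p_c dvdnn.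
exists (c + d * t); last by rewrite addnC mulnC modnMDl.
apply: coprime_of_primes => // p p_pr p_n.
have p_primes : p \in primes n by rewrite mem_primes p_pr n_gt0.
have [p_c | p_nc] := boolP (p %| c).
  have p_nd : ~~ (p %| d) by rewrite -prime_coprime // (coprime_dvdl p_c cop_cd).
  by rewrite dvdn_addr // Euclid_dvdM // negb_or p_nd dvd_t // p_c andbF.
by rewrite dvdn_addl ?p_nc // dvdn_mull // dvd_t // p_primes.
Qed.

(* Witness: [1 + d (q/p)] for a prime [p] dividing [q] and [d]; otherwise
   the solution of [w = -1 mod q], [w = 1 mod d]. *)
Lemma units_mod_kernel_nontrivial q d : 1 < q -> 0 < d -> ~~ ((q == 2) && odd d) ->
  exists w, [/\ coprime w (q * d), w = 1 %[mod d] & w != 1 %[mod q * d]].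
Proof.
move=> q_gt1 d_gt0 not_2odd; have q_gt0 := ltnW q_gt1.
have [cop_qd | ncop_qd] := boolP (coprime q d).
  have q_gt2 : 2 < q.
    case: q q_gt1 not_2odd cop_qd {q_gt0} => [|[|[|q]]] //= _.
    by rewrite coprime2n => /negbTE->.
  exists (chinese q d q.-1 1); split; last first.
  - rewrite chinese_remainder // chinese_modl // !(@modn_small _ q) ?ltn_predL //.
    apply/negP => /andP[/eqP q1 _]; move: q_gt2.
    by rewrite -(prednK q_gt0) q1.
  - exact: chinese_modr.
  rewrite coprimeMr -coprime_modl chinese_modl // coprime_modl coprimePn //.
  by rewrite -coprime_modl chinese_modr // coprime_modl coprime1n.
have g_gt1 : 1 < gcdn q d.
  by rewrite ltn_neqAle eq_sym ncop_qd gcdn_gt0 q_gt0.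
have p_pr := pdiv_prime g_gt1; set p := pdiv _ in p_pr.
have p_q : p %| q := dvdn_trans (pdiv_dvd _) (dvdn_gcdl q d).
have p_d : p %| d := dvdn_trans (pdiv_dvd _) (dvdn_gcdr q d).
exists (1 + d * (q %/ p)); split.
- apply: coprime_of_primes; first by rewrite muln_gt0 q_gt0.
  move=> p' p'_pr p'_qd; rewrite dvdn_addl ?Euclid_dvd1 //.
  have [->|p'_neq] := eqVneq p' p; first exact: dvdn_mulr.
  move: p'_qd; rewrite Euclid_dvdM // => /orP[p'_q|p'_d]; last exact: dvdn_mulr.
  apply: dvdn_mull; move: p'_q; rewrite -{1}(divnK p_q) Euclid_dvdM //.
  by rewrite (dvdn_prime2 p'_pr p_pr) (negbTE p'_neq) orbF.
- by rewrite addnC mulnC modnMDl.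
rewrite eqn_mod_dvd ?leq_addr // addKn [d * _]mulnC dvdn_pmul2r // gtnNdvd //.
  by rewrite divn_gt0 ?prime_gt0 // dvdn_leq.
by rewrite ltn_Pdiv ?prime_gt1.
Qed.

Section ResidueRing.
Local Open Scope ring_scope.
Variable m : nat.
Hypothesis m_gt1 : (1 < m)%N.
Let m_gt0 : (0 < m)%N := ltnW m_gt1.

(* The additive order of [x], i.e. the size of the ideal [x 'Z_m]. *)
Definition zp_ord (x : 'Z_m) : nat := m %/ gcdn x m.

Lemma val_Zp1 : (1 : 'Z_m) = 1%N :> nat.
Proof. by rewrite -[1]/(1%:R) val_Zp_nat // modn_small. Qed.

Lemma eqZp_nat a b : ((a%:R : 'Z_m) == b%:R) = (a == b %[mod m])%N.
Proof. by rewrite -(inj_eq (@ord_inj _)) !val_Zp_nat. Qed.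

Lemma val_ZpM x y : (x * y : 'Z_m) = (x * y %% m)%N :> nat.
Proof. by rewrite -val_Zp_nat // natrM !natr_Zp. Qed.

Lemma zp_ord_gt0 x : (0 < zp_ord x)%N.
Proof. by rewrite divn_gt0 ?gcdn_gt0 ?m_gt0 ?orbT // dvdn_leq ?dvdn_gcdr. Qed.

Lemma zp_ord_dvd x : (zp_ord x %| m)%N.
Proof. exact/dvdn_div/dvdn_gcdr. Qed.

Lemma zp_ord1 : zp_ord 1 = m.
Proof. by rewrite /zp_ord val_Zp1 gcd1n divn1. Qed.

Lemma zp_ordM x b : zp_ord (x * b) = (zp_ord x %/ gcdn b (zp_ord x))%N.
Proof. by rewrite /zp_ord val_ZpM gcdn_modl divn_gcdM. Qed.

Lemma odd_zp_ordM x b : odd (zp_ord x) -> odd (zp_ord (x * b)).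
Proof.
by rewrite zp_ordM -{1}(divnK (dvdn_gcdr b (zp_ord x))) oddM => /andP[].
Qed.

Lemma eqZp_mul2l (x u v : 'Z_m) : (x * u == x * v) = (u == v %[mod zp_ord x])%N.
Proof. by rewrite -(inj_eq (@ord_inj _)) !val_ZpM eqn_modMl. Qed.

Lemma Zp_lift_unit d c : (d %| m)%N -> coprime c d ->
  exists2 u : 'Z_m, u \is a GRing.unit & (u = c %[mod d])%N.
Proof.
move=> d_m c_d; have [u u_m u_c] := coprime_lift m_gt0 d_m c_d.
exists u%:R; first by rewrite unitZpE // coprime_sym.
by rewrite val_Zp_nat // modn_dvdm.
Qed.

(* Multiplying by [b] divides the order [N] of [x] by [g = gcd(b, N)].  If
   [g = 1], [b] lifts to a unit; if [g = 2] and [N/g] is odd, the parity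
   changes; otherwise a unit that is 1 mod [N/g] but not mod [N] separates. *)
Lemma Zp_mul_trichotomy x b :
  [\/ exists2 u : 'Z_m, u \is a GRing.unit & x * b = x * u,
      exists w : 'Z_m, [/\ w \is a GRing.unit, x * b * w = x * b & x * w != x]
    | ~~ odd (zp_ord x) && odd (zp_ord (x * b))].
Proof.
set N := zp_ord x; set g := gcdn b N; set d := (N %/ g)%N.
have N_gt0 : (0 < N)%N := zp_ord_gt0 x.
have N_gd : N = (g * d)%N by rewrite mulnC divnK ?dvdn_gcdr.
have ord_xb : zp_ord (x * b) = d := zp_ordM x b.
have [g1 | g_neq1] := eqVneq g 1%N.
  have [u u_unit u_b] := Zp_lift_unit (zp_ord_dvd x) (introT eqP g1).
  by apply: Or31; exists u => //; apply/eqP; rewrite eqZp_mul2l u_b.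
have g_gt1 : (1 < g)%N by rewrite ltn_neqAle eq_sym g_neq1 gcdn_gt0 N_gt0 orbT.
have d_gt0 : (0 < d)%N by move: N_gt0; rewrite N_gd muln_gt0 => /andP[].
have [/andP[/eqP g2 d_odd] | not_2odd] := boolP ((g == 2) && odd d).
  by apply: Or33; rewrite ord_xb d_odd N_gd g2 mul2n odd_double.
have [w [w_unit w_1 w_not1]] := units_mod_kernel_nontrivial g_gt1 d_gt0 not_2odd.
rewrite -N_gd in w_unit w_not1.
have [W W_unit W_w] := Zp_lift_unit (zp_ord_dvd x) w_unit.
apply: Or32; exists W; split => //.
  have d_N : (d %| N)%N by rewrite N_gd dvdn_mull.
  apply/eqP; rewrite -[X in _ == X]mulr1 eqZp_mul2l ord_xb val_Zp1 -w_1.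
  by rewrite -(modn_dvdm _ d_N) W_w modn_dvdm.
by rewrite -[X in _ != X]mulr1 eqZp_mul2l val_Zp1 -/N W_w.
Qed.

Lemma unitZp2 : ((2%:R : 'Z_m) \is a GRing.unit) = odd m.
Proof. by rewrite unitZpE // coprimen2. Qed.

Lemma unitZp_fix2 (u : 'Z_m) : (2 %| m)%N -> ~~ (4 %| m)%N -> u \is a GRing.unit ->
  u * 2%:R = 2%:R -> u = 1.
Proof.
move=> two_m four_m u_unit /eqP; rewrite mulrC -[X in _ == X]mulr1 eqZp_mul2l.
have -> : zp_ord 2%:R = (m %/ 2)%N.
  by rewrite /zp_ord val_Zp_nat // gcdn_modl (gcdn_idPl two_m).
have m_eq : m = (2 * (m %/ 2))%N by rewrite mulnC divnK.
have half_odd : odd (m %/ 2).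
  apply: contraR four_m; rewrite -dvdn2 => two_half.
  by rewrite -(divnK two_m) -[4%N]/(2 * 2)%N dvdn_pmul2r.
have u_odd : odd u.
  move: u_unit; rewrite -[X in X \is a _]natr_Zp unitZpE // => /(coprime_dvdl two_m).
  by rewrite coprime2n.
move=> u_half; rewrite -(natr_Zp u) -[1]/(1%:R); apply/eqP; rewrite eqZp_nat.
have := chinese_remainder (_ : coprime 2 (m %/ 2)) u 1; rewrite -m_eq => -> //.
  by rewrite u_half andbT modn2 u_odd.
by rewrite coprime2n.
Qed.

End ResidueRing.

Section DirectSum.
Local Open Scope ring_scope.
Variables (r : nat) (n : 'I_r -> nat).
Hypothesis n_gt1 : forall i, (1 < n i)%N.

Local Notation R := (ringR n).
Local Notation mul := (@mulR r n).
Local Notation one := (oneR n).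
Local Notation prod := (seqsum mul one).
Local Notation invertible := (is_unit mul one).

Lemma mulRE (x y : R) i : mul x y i = x i * y i.
Proof. by rewrite ffunE. Qed.

Lemma oneRE i : one i = 1.
Proof. by rewrite ffunE. Qed.

Lemma mulRA : associative mul.
Proof. by move=> x y z; apply/ffunP => i; rewrite !mulRE mulrA. Qed.

Lemma mulRC : commutative mul.
Proof. by move=> x y; apply/ffunP => i; rewrite !mulRE mulrC. Qed.

Lemma mul1R : left_id one mul.
Proof. by move=> x; apply/ffunP => i; rewrite mulRE oneRE mul1r. Qed.

Lemma prodRE s i : prod s i = \prod_(a <- s) a i.
Proof.
elim: s => [|a s IH]; first by rewrite big_nil oneRE.
by rewrite big_cons /= mulRE -IH.
Qed.

Lemma invertibleRP (x : R) : reflect (forall i, x i \is a GRing.unit) (invertible x).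
Proof.
apply: (iffP existsP) => [[y /eqP xy] i | x_u].
  by apply/unitrPr; exists (y i); rewrite -mulRE xy oneRE.
exists [ffun i => (x i)^-1]; apply/eqP/ffunP => i.
by rewrite mulRE ffunE oneRE (mulrV (x_u i)).
Qed.

Definition even_ord_set (x : R) := [set i | ~~ odd (zp_ord (x i))].

Lemma even_ord_setM (x a : R) : even_ord_set (mul x a) \subset even_ord_set x.
Proof.
apply/subsetP => i; rewrite !inE mulRE; apply: contra.
exact: odd_zp_ordM.
Qed.

Lemma card_even_ord_setM (x a : R) : (#|even_ord_set (mul x a)| <= #|even_ord_set x|)%N.
Proof. exact/subset_leq_card/even_ord_setM. Qed.

Lemma card_even_ord_set1 : #|even_ord_set one| = #|[set i | 2 %| n i]%N|.
Proof. by apply: eq_card => i; rewrite !inE oneRE zp_ord1 // dvdn2. Qed.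

Lemma mulR_trichotomy (x a : R) :
  [\/ exists2 u, invertible u & mul x a = mul x u,
      exists w, [/\ invertible w, mul (mul x a) w = mul x a & mul x w <> x]
    | (#|even_ord_set (mul x a)| < #|even_ord_set x|)%N].
Proof.
pose assoc i (u : 'Z_(n i)) := (u \is a GRing.unit) && (x i * a i == x i * u).
have [all_assoc | /forallPn[i /existsPn no_assoc]] :=
  boolP [forall i, [exists u, assoc i u]].
  have /fin_all_exists[u u_assoc] : forall i, exists u, assoc i u.
    by move=> i; apply/existsP; apply: (forallP all_assoc).
  apply: Or31; exists (finfun u).
    by apply/invertibleRP => i; rewrite ffunE; case/andP: (u_assoc i).
  by apply/ffunP => i; rewrite !mulRE ffunE; case/andP: (u_assoc i) => _ /eqP.
case: (Zp_mul_trichotomy (n_gt1 i) (x i) (a i)).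
- by case=> u u_unit xau; have := no_assoc u; rewrite /assoc u_unit xau eqxx.
- case=> w [w_unit xaw xw]; apply: Or32.
  pose fixing j (v : 'Z_(n j)) :=
    [&& v \is a GRing.unit, x j * a j * v == x j * a j & (j == i) ==> (x j * v != x j)].
  have /fin_all_exists[v v_fix] : forall j, exists v, fixing j v.
    move=> j; case: (eqVneq j i) => [->|ji].
      by exists w; rewrite /fixing w_unit xaw !eqxx xw.
    by exists 1; rewrite /fixing unitr1 mulr1 eqxx (negbTE ji).
  exists (finfun v); split.
  + by apply/invertibleRP => j; rewrite ffunE; case/and3P: (v_fix j).
  + by apply/ffunP => j; rewrite !mulRE ffunE; case/and3P: (v_fix j) => _ /eqP.
  + move=> /ffunP/(_ i); rewrite mulRE ffunE; apply/eqP.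
    by case/and3P: (v_fix i) => _ _; rewrite eqxx.
- case/andP=> even_x odd_xa; apply: Or33; apply: proper_card; apply/properP.
  split; first exact: even_ord_setM.
  by exists i; rewrite !inE ?mulRE ?odd_xa.
Qed.

Definition two_at (i : 'I_r) : R := [ffun j => if j == i then 2%:R else 1].

Lemma prod_two_at L j : uniq L -> prod (map two_at L) j = if j \in L then 2%:R else 1.
Proof.
rewrite prodRE big_map; elim: L => [|i L IH] /=; first by rewrite big_nil.
case/andP=> i_L L_uniq; rewrite big_cons IH // ffunE in_cons.
by case: (eqVneq j i) => [->|_] /=; rewrite ?(negbTE i_L) ?mulr1 ?mul1r.
Qed.

Lemma two_at_rigid (P : {set 'I_r}) : {in P, forall i, 2 %| n i}%N ->
  unit_rigid mul one (map two_at (enum P)).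
Proof.
move=> P_even u v m /invertibleRP u_u /invertibleRP v_u; rewrite size_map => sz not_all.
have [i i_P i_out] : exists2 i, i \in enum P & i \notin mask m (enum P).
  apply/allPn; apply: contra not_all => /allP P_sub.
  have := uniq_leq_size (enum_uniq (mem P)) P_sub; rewrite size_mask // -sz => le_m.
  by rewrite all_count eqn_leq count_size.
move=> /ffunP/(_ i); rewrite !mulRE -map_mask !prod_two_at ?mask_uniq ?enum_uniq //.
rewrite (negbTE i_out) i_P mulr1 => eq_i.
have := u_u i; rewrite eq_i unitrM v_u unitZp2 //=.
by rewrite mem_enum in i_P; rewrite -[odd _]negbK -dvdn2 P_even.
Qed.

Lemma two_at_stab_trivial (P : {set 'I_r}) :
  {in P, forall i, (2 %| n i) && ~~ (4 %| n i)}%N ->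
  unit_stab_trivial mul one (map two_at (enum P)).
Proof.
move=> P_half d /invertibleRP d_u /ffunP eq_d; apply/ffunP => i.
have := eq_d i; rewrite mulRE prod_two_at ?enum_uniq // oneRE mem_enum.
case: ifP => [i_P | _]; last by rewrite mulr1.
by case/andP: (P_half i i_P) => two four; apply: unitZp_fix2.
Qed.

End DirectSum.

Theorem theorem1p1 (r : nat) (n : 'I_r -> nat) :
  1 <= r -> (forall i, 1 < n i) ->
  exists dS dU : nat,
    [/\ is_davenport (@mulR r n) (oneR n) predT dS,
        is_davenport (@mulR r n) (oneR n) (is_unit (@mulR r n) (oneR n)) dU,
        dU + #|[set i : 'I_r | (2 %| n i) && ~~ (4 %| n i)]| <= dS
      & dS <= dU + #|[set i : 'I_r | 2 %| n i]|].
Proof.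
move=> _ n_gt1.
have mA := @mulRA r n; have mC := @mulRC r n; have m1 := @mul1R r n.
have [dS hS] := davenport_exists mA m1 predT.
have [dU hU] := davenport_exists mA m1 (is_unit (@mulR r n) (oneR n)).
exists dS, dU; split => //.
  set P := [set i | _].
  have P_half : {in P, forall i, (2 %| n i) && ~~ (4 %| n i)} by move=> i; rewrite inE.
  have P_even : {in P, forall i, 2 %| n i} by move=> i /P_half /andP[].
  have := davenport_lower_bound mA mC m1 hS hU
    (two_at_rigid n_gt1 P_even) (two_at_stab_trivial n_gt1 P_half).
  by rewrite size_map -cardE.
rewrite -card_even_ord_set1 //.
exact: davenport_upper_bound mA mC m1 _
  (card_even_ord_setM n_gt1) (mulR_trichotomy n_gt1) _ _ hS hU.
Qed.
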